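(* Let $(P,Q):[\tau_0,\infty)\times S^1\to\mathbb{R}^2$ be a smooth solution of \[ P_{\tau\tau}-e^{-2\tau}P_{\theta\theta}-e^{2P}(Q_\tau^2-e^{-2\tau}Q_\theta^2)=0,\qquad Q_{\tau\tau}-e^{-2\tau}Q_{\theta\theta}+2(P_\tau Q_\tau-e^{-2\tau}P_\theta Q_\theta)=0, \] with $\tau_0\ge2$, such that for some $\gamma>0$ and all $\theta\in S^1$, $1\le P(\tau_0,\theta)\le\tau_0-1$ and $\gamma\le P(\tau_0,\theta)/\tau_0\le1-\gamma$, and $F(\tau_0)\le(\gamma-\alpha)^2$ for some $0<\alpha<\gamma$. Then there is a constant $C$ such that for all $\tau\ge\tau_0$, \[ \big\|e^{2P}[Q_\tau^2(\tau,\cdot)+e^{-2\tau}Q_\theta^2(\tau,\cdot)]\big\|_{C^0(S^1,\mathbb{R})}\le Ce^{-\alpha\tau}. \]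
   Context: $S^1=\mathbb{R}/2\pi\mathbb{Z}$; $\|\cdot\|_{C^0}$ is the sup norm. The function $F$ is \[ F(\tau)=\tfrac12\sup_{\theta\in S^1}\Big[(P_\tau-\tfrac1\tau P+e^{-\tau}P_\theta)^2+e^{2P}(Q_\tau+e^{-\tau}Q_\theta)^2\Big] +\tfrac12\sup_{\theta\in S^1}\Big[(P_\tau-\tfrac1\tau P-e^{-\tau}P_\theta)^2+e^{2P}(Q_\tau-e^{-\tau}Q_\theta)^2\Big]. \] *)

From Stdlib Require Import Reals.
From Coquelicot Require Import Coquelicot.
Open Scope R_scope.

Definition fn2 := R -> R -> R.

Definition d_tau (f : fn2) : fn2 := fun t th => Derive (fun s => f s th) t.
Definition d_th  (f : fn2) : fn2 := fun t th => Derive (fun s => f t s) th.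

Definition cont2 (f : fn2) : Prop :=
  forall t th, continuous (fun p : R * R => f (fst p) (snd p)) (t, th).

Fixpoint Ck (k : nat) (f : fn2) : Prop :=
  match k with
  | O => cont2 f
  | S k' => cont2 f /\
      (forall t th, ex_derive (fun s => f s th) t /\ ex_derive (fun s => f t s) th) /\
      Ck k' (d_tau f) /\ Ck k' (d_th f)
  end.

Definition smooth2 (f : fn2) : Prop := forall k, Ck k f.

(* 2pi-periodicity in theta: f is a function on R x S^1. *)
Definition periodic_th (f : fn2) : Prop :=
  forall t th, f t (th + 2 * PI) = f t th.

(* Supremum over theta in S^1 (= over R, by periodicity), in Rbar. *)
Definition sup_th (g : R -> R) : Rbar :=
  Lub_Rbar (fun y => exists th, y = g th).

(* The function F(tau) of the paper (valued in Rbar; it is finite for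
   smooth periodic P, Q). *)
Definition F_fun (P Q : fn2) (tau : R) : Rbar :=
  Rbar_plus
    (Rbar_mult (Finite (/ 2)) (sup_th (fun th =>
       (d_tau P tau th - / tau * P tau th + exp (- tau) * d_th P tau th) ^ 2
       + exp (2 * P tau th) * (d_tau Q tau th + exp (- tau) * d_th Q tau th) ^ 2)))
    (Rbar_mult (Finite (/ 2)) (sup_th (fun th =>
       (d_tau P tau th - / tau * P tau th - exp (- tau) * d_th P tau th) ^ 2
       + exp (2 * P tau th) * (d_tau Q tau th - exp (- tau) * d_th Q tau th) ^ 2))).

Definition solves_system (P Q : fn2) (tau0 : R) : Prop :=
  forall t th, tau0 <= t ->
    d_tau (d_tau P) t th - exp (- 2 * t) * d_th (d_th P) t th
      - exp (2 * P t th) * ((d_tau Q t th) ^ 2 - exp (- 2 * t) * (d_th Q t th) ^ 2) = 0 /\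
    d_tau (d_tau Q) t th - exp (- 2 * t) * d_th (d_th Q) t th
      + 2 * (d_tau P t th * d_tau Q t th - exp (- 2 * t) * d_th P t th * d_th Q t th) = 0.

From Stdlib Require Import Reals Lra Psatz ZArith Classical.
From Coquelicot Require Import Coquelicot.
Open Scope R_scope.

(* Along the curves theta = c + w e^(-tau), w = 1 or -1, the system becomes a transport
   system for Z_w = P_tau + w e^(-tau) P_theta - 1/2 and b_w = e^P (Q_tau + w e^(-tau) Q_theta):
   writing ' for the derivative along such a curve,
     Z_w' = b_1 b_(-1) + (Z_(-w) - Z_w) / 2,     b_w' = - b_w / 2 - Z_w b_(-w),
   so the energies e_w = Z_w^2 + b_w^2 satisfy e_w' = - e_w + Z_1 Z_(-1).
   A maximum principle along these curves shows that sup e_1 + sup e_(-1) never increases;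
   at tau0 the hypotheses on P and F bound it by 2 (1/2 - alpha)^2.  Then each e_w, hence
   each Z_w^2, eventually drops below kappa^2 with kappa = 1/2 - 3 alpha / 4, after which
   (b_1^2 + b_(-1)^2)' <= - (1 - 2 kappa) (b_1^2 + b_(-1)^2) and 1 - 2 kappa = 3 alpha / 2 > alpha.
   Finally e^(2P) (Q_tau^2 + e^(-2 tau) Q_theta^2) = (b_1^2 + b_(-1)^2) / 2. *)

Lemma real_induction (A : R -> Prop) (T0 : R) :
  A T0 ->
  (forall u, T0 <= u -> A u -> exists d, 0 < d /\ forall s, u <= s < u + d -> A s) ->
  (forall T, T0 < T -> (forall s, T0 <= s < T -> A s) -> A T) ->
  forall t, T0 <= t -> A t.
Proof.
  intros H0 Hopen Hclosed t Ht.
  set (E := fun s => T0 <= s <= t /\ forall u, T0 <= u <= s -> A u).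
  assert (HEb : bound E) by (exists t; intros s [[_ Hs] _]; exact Hs).
  assert (HE0 : E T0) by (split; [lra | intros u Hu; replace u with T0 by lra; exact H0]).
  destruct (completeness E HEb (ex_intro _ T0 HE0)) as [T [HTub HTlub]].
  assert (HT0 : T0 <= T) by exact (HTub T0 HE0).
  assert (HTt : T <= t) by (apply HTlub; intros s [[_ Hs] _]; exact Hs).
  assert (Hbefore : forall s, T0 <= s < T -> A s).
  { intros s Hs. apply NNPP; intros HnA.
    assert (T <= s); [|lra].
    apply HTlub. intros e [_ He]. apply Rnot_lt_le; intros Hse.
    apply HnA, He; lra. }
  assert (HAT : A T).
  { destruct (Req_dec T T0) as [-> | HT]; [exact H0 | apply Hclosed; [lra | exact Hbefore]]. }
  destruct (Req_dec T t) as [<- | HTt'].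
  - exact HAT.
  - destruct (Hopen T HT0 HAT) as [d [Hd Hafter]].
    set (s := T + Rmin d (t - T) / 2).
    assert (Hmin : 0 < Rmin d (t - T) <= d /\ Rmin d (t - T) <= t - T).
    { split; [split; [apply Rmin_pos; lra | apply Rmin_l] | apply Rmin_r]. }
    assert (HEs : E s).
    { split; [unfold s; lra |].
      intros u Hu. destruct (Rlt_le_dec u T).
      - apply Hbefore; lra.
      - apply Hafter. unfold s in Hu. lra. }
    specialize (HTub s HEs). unfold s in HTub. lra.
Qed.

Lemma is_derive_neg_left (f : R -> R) (x l : R) :
  is_derive f x l -> l < 0 -> exists d, 0 < d /\ forall h, 0 < h < d -> f x < f (x - h).
Proof.
  intros Hf Hl. apply is_derive_Reals in Hf.
  destruct (Hf (- l / 2)) as [d Hd]; [lra |].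
  exists d. split; [apply cond_pos |]. intros h Hh.
  assert (Hh' : Rabs (- h) < d) by (rewrite Rabs_Ropp, Rabs_pos_eq; lra).
  specialize (Hd (- h) ltac:(lra) Hh'). apply Rabs_def2 in Hd.
  replace (x + - h) with (x - h) in Hd by ring.
  assert (Hq : f (x - h) - f x = (f (x - h) - f x) / - h * - h) by (field; lra).
  nra.
Qed.

Lemma is_derive_continuity (f : R -> R) (x l : R) :
  is_derive f x l -> forall eps, 0 < eps ->
  exists d, 0 < d /\ forall s, Rabs (s - x) < d -> Rabs (f s - f x) < eps.
Proof.
  intros Hf eps Heps.
  assert (Hc : continuity_pt f x).
  { apply continuity_pt_filterlim, (@ex_derive_continuous R_AbsRing R_NormedModule).
    exists l; exact Hf. }
  destruct (Hc eps Heps) as [d [Hd Hfd]].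
  exists d. split; [exact Hd |]. intros s Hs.
  destruct (Req_dec s x) as [-> | Hne].
  - rewrite Rminus_eq_0, Rabs_R0; exact Heps.
  - apply (Hfd s). split; [split; [exact I | auto] | exact Hs].
Qed.

Section Comparison.

Variables (X : Type) (G : R -> X -> R) (B dB : R -> R) (T0 : R).

Hypothesis G_max : forall t, exists x, forall y, G t y <= G t x.
Hypothesis G_equicont : forall t eps, 0 < eps ->
  exists d, 0 < d /\ forall s x, Rabs (s - t) < d -> Rabs (G s x - G t x) < eps.
Hypothesis B_deriv : forall t, is_derive B t (dB t).

Lemma below_barrier_open u :
  (forall x, G u x < B u) ->
  exists d, 0 < d /\ forall s x, Rabs (s - u) < d -> G s x < B s.
Proof.
  intros Hu. destruct (G_max u) as [xm Hxm].
  set (eta := B u - G u xm).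
  assert (Heta : 0 < eta / 2) by (specialize (Hu xm); unfold eta; lra).
  destruct (G_equicont u (eta / 2) Heta) as [d1 [Hd1 HG]].
  destruct (is_derive_continuity B u (dB u) (B_deriv u) (eta / 2) Heta) as [d2 [Hd2 HB]].
  exists (Rmin d1 d2). split; [apply Rmin_pos; lra |]. intros s x Hs.
  assert (A1 := HG s x ltac:(eapply Rlt_le_trans; [exact Hs | apply Rmin_l])).
  assert (A2 := HB s ltac:(eapply Rlt_le_trans; [exact Hs | apply Rmin_r])).
  apply Rabs_def2 in A1. apply Rabs_def2 in A2. specialize (Hxm x). unfold eta in *. lra.
Qed.

Lemma below_barrier_limit T x :
  T0 < T -> (forall s, T0 <= s < T -> forall y, G s y < B s) -> G T x <= B T.
Proof.
  intros HT Hbefore. apply Rnot_lt_le; intros Hgt.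
  set (eta := G T x - B T).
  assert (Heta : 0 < eta / 2) by (unfold eta; lra).
  destruct (G_equicont T (eta / 2) Heta) as [d1 [Hd1 HG]].
  destruct (is_derive_continuity B T (dB T) (B_deriv T) (eta / 2) Heta) as [d2 [Hd2 HB]].
  set (d := Rmin (Rmin d1 d2) (T - T0)).
  assert (Hd : 0 < d /\ d <= d1 /\ d <= d2 /\ d <= T - T0).
  { unfold d. repeat split.
    - repeat apply Rmin_pos; lra.
    - eapply Rle_trans; [apply Rmin_l | apply Rmin_l].
    - eapply Rle_trans; [apply Rmin_l | apply Rmin_r].
    - apply Rmin_r. }
  assert (Hs : Rabs (T - d / 2 - T) < d) by (rewrite Rabs_left; lra).
  assert (A1 := HG (T - d / 2) x ltac:(lra)).
  assert (A2 := HB (T - d / 2) ltac:(lra)).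
  apply Rabs_def2 in A1. apply Rabs_def2 in A2.
  assert (A3 := Hbefore (T - d / 2) ltac:(lra) x). unfold eta in *. lra.
Qed.

Lemma below_barrier_no_touch T (c : R -> X) D :
  T0 < T -> (forall s, T0 <= s < T -> forall y, G s y < B s) ->
  is_derive (fun s => G s (c s)) T D -> D < dB T -> G T (c T) <> B T.
Proof.
  intros HT Hbefore HD HDl Heq.
  set (f := fun s => G s (c s) - B s).
  assert (Hf : is_derive f T (D - dB T)) by (apply @is_derive_minus; auto).
  destruct (is_derive_neg_left f T _ Hf ltac:(lra)) as [d [Hd Hleft]].
  set (h := Rmin (d / 2) ((T - T0) / 2)).
  assert (Hh : 0 < h < d /\ h <= (T - T0) / 2).
  { unfold h. repeat split; [apply Rmin_pos; lra | | apply Rmin_r].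
    eapply Rle_lt_trans; [apply Rmin_l | lra]. }
  specialize (Hleft h (proj1 Hh)).
  assert (Hb := Hbefore (T - h) ltac:(lra) (c (T - h))).
  unfold f in Hleft. lra.
Qed.

Theorem comparison_principle :
  (forall x, G T0 x < B T0) ->
  (forall t x, T0 < t -> (forall y, G t y <= B t) -> G t x = B t ->
     exists (c : R -> X) (D : R), c t = x /\ is_derive (fun s => G s (c s)) t D /\ D < dB t) ->
  forall t x, T0 <= t -> G t x < B t.
Proof.
  intros Hinit Htouch t x Ht. revert x.
  apply (real_induction (fun u => forall x, G u x < B u) T0); auto.
  - intros u _ Hu. destruct (below_barrier_open u Hu) as [d [Hd Hnear]].
    exists d. split; [exact Hd |]. intros s Hs y. apply Hnear. rewrite Rabs_pos_eq; lra.
  - intros T HT Hbefore y.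
    assert (Hle : forall z, G T z <= B T) by (intros z; apply below_barrier_limit; auto).
    destruct (Rle_lt_or_eq_dec _ _ (Hle y)) as [Hlt | Heq]; [exact Hlt | exfalso].
    destruct (Htouch T y HT Hle Heq) as [c [D [Hcy [HD HDl]]]].
    apply (below_barrier_no_touch T c D HT Hbefore HD HDl). rewrite Hcy. exact Heq.
Qed.

End Comparison.

Lemma periodic_th_shift (g : fn2) :
  periodic_th g -> forall (k : Z) t th, g t (th + IZR k * (2 * PI)) = g t th.
Proof.
  intros Hg.
  assert (Hnat : forall n t th, g t (th + INR n * (2 * PI)) = g t th).
  { induction n as [|n IH]; intros t th.
    - simpl. f_equal. ring.
    - rewrite S_INR, <- (IH t th), <- (Hg t (th + INR n * (2 * PI))). f_equal. ring. }
  intros k t th. destruct (Z_le_gt_dec 0 k) as [Hk | Hk].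
  - rewrite <- (Z2Nat.id k Hk), <- INR_IZR_INZ. apply Hnat.
  - replace k with (- Z.of_nat (Z.to_nat (- k)))%Z by lia.
    rewrite opp_IZR, <- INR_IZR_INZ, <- (Hnat (Z.to_nat (- k)) t). f_equal. ring.
Qed.

Lemma periodic_th_reduce (g : fn2) :
  periodic_th g -> forall th, exists th', 0 <= th' <= 2 * PI /\ forall t, g t th = g t th'.
Proof.
  intros Hg th. assert (HPI := PI_RGT_0).
  set (k := Zfloor (th / (2 * PI))).
  assert (Hk := Zfloor_bound (th / (2 * PI))). fold k in Hk.
  assert (Hth : th = th / (2 * PI) * (2 * PI)) by (field; lra).
  exists (th + IZR (- k) * (2 * PI)). rewrite opp_IZR. split.
  - split; nra.
  - intros t. rewrite <- opp_IZR, periodic_th_shift; auto.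
Qed.

Lemma continuity_2d_pt_th (g : fn2) t th :
  continuity_2d_pt g t th -> continuity_pt (fun v => g t v) th.
Proof.
  intros Hg eps Heps. destruct (Hg (mkposreal eps Heps)) as [d Hd].
  exists d. split; [apply cond_pos |]. intros v [_ Hv].
  apply Hd; [rewrite Rminus_eq_0, Rabs_R0; apply cond_pos | exact Hv].
Qed.

Section PeriodicCompactness.

Variable g : fn2.
Hypothesis g_cont : forall t th, continuity_2d_pt g t th.
Hypothesis g_per : periodic_th g.

Lemma periodic_max t : exists th, forall th', g t th' <= g t th.
Proof.
  assert (HPI := PI_RGT_0).
  destruct (continuity_ab_maj (fun v => g t v) 0 (2 * PI)) as [thm [Hthm _]]; [lra | |].
  { intros v _. apply continuity_2d_pt_th, g_cont. }
  exists thm. intros th. destruct (periodic_th_reduce g g_per th) as [th' [Hth' ->]].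
  apply Hthm, Hth'.
Qed.

Lemma periodic_equicont t eps : 0 < eps ->
  exists d, 0 < d /\ forall s th, Rabs (s - t) < d -> Rabs (g s th - g t th) < eps.
Proof.
  intros Heps. assert (HPI := PI_RGT_0).
  destruct (uniform_continuity_2d g (t - 1) (t + 1) 0 (2 * PI) (fun x y _ _ => g_cont x y)
    (mkposreal eps Heps)) as [d Hd].
  exists (Rmin d 1). split; [apply Rmin_pos; [apply cond_pos | lra] |].
  intros s th Hs. destruct (periodic_th_reduce g g_per th) as [th' [Hth' Hg]].
  rewrite !Hg.
  assert (Hs1 : Rabs (s - t) < d) by (eapply Rlt_le_trans; [exact Hs | apply Rmin_l]).
  assert (Hs2 : Rabs (s - t) < 1) by (eapply Rlt_le_trans; [exact Hs | apply Rmin_r]).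
  apply Rabs_def2 in Hs2 as Hs2'.
  apply (Hd t th' s th'); try lra.
  rewrite Rminus_eq_0, Rabs_R0. apply cond_pos.
Qed.

End PeriodicCompactness.

Lemma periodic_d_tau (f : fn2) : periodic_th f -> periodic_th (d_tau f).
Proof. intros Hf t th. unfold d_tau. apply Derive_ext. intros s. apply Hf. Qed.

Lemma periodic_d_th (f : fn2) : periodic_th f -> periodic_th (d_th f).
Proof.
  intros Hf t th. unfold d_th, Derive. f_equal. apply Lim_ext. intros h.
  rewrite <- (Hf t (th + h)), <- (Hf t th). f_equal. f_equal. f_equal. ring.
Qed.

Lemma periodic_comparison (g : fn2) (B dB : R -> R) (T0 : R) :
  (forall t th, continuity_2d_pt g t th) -> periodic_th g ->
  (forall t, is_derive B t (dB t)) ->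
  (forall th, g T0 th < B T0) ->
  (forall t th, T0 < t -> (forall th', g t th' <= B t) -> g t th = B t ->
     exists (c : R -> R) (D : R), c t = th /\ is_derive (fun s => g s (c s)) t D /\ D < dB t) ->
  forall t th, T0 <= t -> g t th < B t.
Proof.
  intros Hc Hp HB. apply comparison_principle; auto.
  - apply periodic_max; auto.
  - intros t eps Heps. apply periodic_equicont; auto.
Qed.

Lemma periodic_comparison2 (g1 g2 : fn2) (B dB : R -> R) (T0 : R) :
  (forall t th, continuity_2d_pt g1 t th) -> (forall t th, continuity_2d_pt g2 t th) ->
  periodic_th g1 -> periodic_th g2 -> (forall t, is_derive B t (dB t)) ->
  (forall th1 th2, g1 T0 th1 + g2 T0 th2 < B T0) ->
  (forall t th1 th2, T0 < t -> (forall p1 p2, g1 t p1 + g2 t p2 <= B t) ->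
     g1 t th1 + g2 t th2 = B t ->
     exists (c1 c2 : R -> R) (D1 D2 : R), c1 t = th1 /\ c2 t = th2 /\
       is_derive (fun s => g1 s (c1 s)) t D1 /\ is_derive (fun s => g2 s (c2 s)) t D2 /\
       D1 + D2 < dB t) ->
  forall t th1 th2, T0 <= t -> g1 t th1 + g2 t th2 < B t.
Proof.
  intros Hc1 Hc2 Hp1 Hp2 HB Hinit Htouch t th1 th2 Ht.
  apply (comparison_principle (R * R) (fun s p => g1 s (fst p) + g2 s (snd p)) B dB T0)
    with (x := (th1, th2)); auto.
  - intros s. destruct (periodic_max g1 Hc1 Hp1 s) as [m1 Hm1].
    destruct (periodic_max g2 Hc2 Hp2 s) as [m2 Hm2].
    exists (m1, m2). intros [p1 p2]. simpl. specialize (Hm1 p1). specialize (Hm2 p2). lra.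
  - intros s eps Heps.
    destruct (periodic_equicont g1 Hc1 Hp1 s (eps / 2)) as [d1 [Hd1 H1]]; [lra |].
    destruct (periodic_equicont g2 Hc2 Hp2 s (eps / 2)) as [d2 [Hd2 H2]]; [lra |].
    exists (Rmin d1 d2). split; [apply Rmin_pos; auto |]. intros u [p1 p2] Hu. simpl.
    assert (A1 := H1 u p1 ltac:(eapply Rlt_le_trans; [exact Hu | apply Rmin_l])).
    assert (A2 := H2 u p2 ltac:(eapply Rlt_le_trans; [exact Hu | apply Rmin_r])).
    apply Rabs_def2 in A1. apply Rabs_def2 in A2. apply Rabs_def1; lra.
  - intros s [p1 p2] Hs Hle Heq.
    destruct (Htouch s p1 p2 Hs (fun q1 q2 => Hle (q1, q2)) Heq)
      as [c1 [c2 [D1 [D2 [Hc1s [Hc2s [HD1 [HD2 HD]]]]]]]].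
    exists (fun u => (c1 u, c2 u)), (D1 + D2). simpl.
    rewrite Hc1s, Hc2s.
    split; [reflexivity | split; [apply (is_derive_plus _ _ _ _ _ HD1 HD2) | exact HD]].
Qed.

Lemma smooth2_d_tau (f : fn2) : smooth2 f -> smooth2 (d_tau f).
Proof. intros Hf k. exact (proj1 (proj2 (proj2 (Hf (S k))))). Qed.

Lemma smooth2_d_th (f : fn2) : smooth2 f -> smooth2 (d_th f).
Proof. intros Hf k. exact (proj2 (proj2 (proj2 (Hf (S k))))). Qed.

Lemma smooth2_continuity (f : fn2) : smooth2 f -> forall t th, continuity_2d_pt f t th.
Proof. intros Hf t th. apply continuity_2d_pt_filterlim, (Hf O). Qed.

Lemma smooth2_ex_derive (f : fn2) t th :
  smooth2 f -> ex_derive (fun s => f s th) t /\ ex_derive (fun s => f t s) th.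
Proof. intros Hf. exact (proj1 (proj2 (Hf 1%nat)) t th). Qed.

Lemma smooth2_ex_diff_n (f : fn2) : smooth2 f -> forall n t th, ex_diff_n f n t th.
Proof.
  intros Hf n. revert f Hf. induction n as [|n IH]; intros f Hf t th.
  - split; [apply smooth2_continuity |]; auto.
  - destruct (smooth2_ex_derive f t th Hf).
    repeat split; auto; [apply smooth2_continuity; auto | |].
    + apply (IH (d_tau f)), smooth2_d_tau, Hf.
    + apply (IH (d_th f)), smooth2_d_th, Hf.
Qed.

Lemma smooth2_differentiable (f : fn2) t th :
  smooth2 f -> differentiable_pt_lim f t th (d_tau f t th) (d_th f t th).
Proof.
  intros Hf eps.
  destruct (Taylor_Lagrange_2d f 1 t th) as [D [d Hd]].
  { exists (mkposreal 1 Rlt_0_1). intros u v _ _. apply smooth2_ex_diff_n, Hf. }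
  set (K := Rmax D 1 + 1).
  assert (HK : 1 <= Rmax D 1 /\ D <= Rmax D 1) by (split; [apply Rmax_r | apply Rmax_l]).
  assert (Hr : 0 < Rmin d (eps / K)).
  { apply Rmin_pos; [apply cond_pos | apply Rdiv_lt_0_compat; [apply cond_pos | unfold K; lra]]. }
  exists (mkposreal _ Hr). simpl. intros u v Hu Hv.
  assert (Hmin : Rmin d (eps / K) <= d /\ Rmin d (eps / K) <= eps / K)
    by (split; [apply Rmin_l | apply Rmin_r]).
  specialize (Hd u v ltac:(lra) ltac:(lra)).
  assert (Hpol : DL_pol 1 f t th (u - t) (v - th)
                 = f t th + (d_tau f t th * (u - t) + d_th f t th * (v - th))).
  { unfold DL_pol, differential, partial_derive, d_tau, d_th. simpl.
    unfold Binomial.C. simpl. field. }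
  rewrite Hpol in Hd.
  set (m := Rmax (Rabs (u - t)) (Rabs (v - th))) in *.
  assert (Hm : 0 <= m <= eps / K).
  { split; [eapply Rle_trans; [apply Rabs_pos | apply Rmax_l] |].
    unfold m. apply Rmax_lub; lra. }
  assert (HmK : m * K <= eps).
  { apply Rmult_le_reg_r with (/ K); [apply Rinv_0_lt_compat; unfold K; lra |].
    rewrite Rmult_assoc, Rinv_r, Rmult_1_r by (unfold K; lra). exact (proj2 Hm). }
  replace (f u v - f t th - (d_tau f t th * (u - t) + d_th f t th * (v - th)))
    with (f u v - (f t th + (d_tau f t th * (u - t) + d_th f t th * (v - th)))) by ring.
  eapply Rle_trans; [exact Hd |]. unfold K in HmK. simpl. nra.
Qed.

Lemma smooth2_chain (f : fn2) (c : R -> R) t dc :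
  smooth2 f -> is_derive c t dc ->
  is_derive (fun s => f s (c s)) t (d_tau f t (c t) + dc * d_th f t (c t)).
Proof.
  intros Hf Hc. apply is_derive_Reals.
  replace (d_tau f t (c t) + dc * d_th f t (c t))
    with (d_tau f t (c t) * 1 + d_th f t (c t) * dc) by ring.
  apply (derivable_pt_lim_comp_2d f (fun s => s) c).
  - apply smooth2_differentiable, Hf.
  - apply derivable_pt_lim_id.
  - apply is_derive_Reals, Hc.
Qed.

Lemma smooth2_schwarz (f : fn2) t th :
  smooth2 f -> d_tau (d_th f) t th = d_th (d_tau f) t th.
Proof.
  intros Hf. apply Schwarz.
  - exists (mkposreal 1 Rlt_0_1). intros u v _ _.
    destruct (smooth2_ex_derive f u v Hf).
    split; [| split]; auto. split.
    + exact (proj1 (smooth2_ex_derive (d_th f) u v (smooth2_d_th f Hf))).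
    + exact (proj2 (smooth2_ex_derive (d_tau f) u v (smooth2_d_tau f Hf))).
  - apply (smooth2_continuity (d_tau (d_th f))), smooth2_d_tau, smooth2_d_th, Hf.
  - apply (smooth2_continuity (d_th (d_tau f))), smooth2_d_th, smooth2_d_tau, Hf.
Qed.

Lemma is_derive_null_combination (A C : R -> R) w t a c :
  is_derive A t a -> is_derive C t c ->
  is_derive (fun s => A s + w * exp (- s) * C s) t (a + w * exp (- t) * (c - C t)).
Proof.
  intros HA HC. auto_derive.
  - repeat split; [exists a | exists c]; auto.
  - replace (Derive (fun x => A x) t) with a by (symmetry; apply is_derive_unique, HA).
    replace (Derive (fun x => C x) t) with c by (symmetry; apply is_derive_unique, HC).
    ring.
Qed.

Lemma is_derive_exp_mult (p g : R -> R) t dp dg :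
  is_derive p t dp -> is_derive g t dg ->
  is_derive (fun s => exp (p s) * g s) t (exp (p t) * (dp * g t + dg)).
Proof.
  intros Hp Hg. auto_derive.
  - repeat split; [exists dp | exists dg]; auto.
  - replace (Derive (fun x => p x) t) with dp by (symmetry; apply is_derive_unique, Hp).
    replace (Derive (fun x => g x) t) with dg by (symmetry; apply is_derive_unique, Hg).
    ring.
Qed.

Lemma is_derive_sq (g : R -> R) t dg :
  is_derive g t dg -> is_derive (fun s => g s ^ 2) t (2 * g t * dg).
Proof.
  intros Hg. auto_derive.
  - exists dg; exact Hg.
  - replace (Derive (fun x => g x) t) with dg by (symmetry; apply is_derive_unique, Hg).
    ring.
Qed.

Lemma exp_double x : exp (2 * x) = exp x ^ 2.
Proof. replace (exp x ^ 2) with (exp x * exp x) by ring. rewrite <- exp_plus. f_equal. ring. Qed.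

Lemma exp_le_exp x y : x <= y -> exp x <= exp y.
Proof.
  intros [Hlt | ->]; [left; apply exp_increasing, Hlt | right; reflexivity].
Qed.

Lemma exp_neg_eventually_le (a eps T0 : R) :
  0 < eps -> exists T, T0 <= T /\ forall t, T <= t -> a * exp (- (t - T0)) <= eps.
Proof.
  intros Heps. set (r := Rabs a / eps + 1).
  assert (Hr : 1 <= r) by (unfold r; assert (0 <= Rabs a / eps)
    by (apply Rdiv_le_0_compat; [apply Rabs_pos | lra]); lra).
  assert (Hln : 0 <= ln r) by (rewrite <- ln_1; apply ln_le; lra).
  exists (T0 + ln r). split; [lra |]. intros t Ht.
  assert (Hexp : exp (- (t - T0)) <= / r).
  { rewrite <- (exp_ln r), <- exp_Ropp by lra. apply exp_le_exp. lra. }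
  assert (Har : Rabs a * / r <= eps).
  { apply (Rmult_le_reg_r r); [lra |]. rewrite Rmult_assoc, Rinv_l by lra.
    unfold r. field_simplify; lra. }
  assert (Hpos := exp_pos (- (t - T0))).
  assert (a * exp (- (t - T0)) <= Rabs a * exp (- (t - T0)))
    by (apply Rmult_le_compat_r; [lra | apply Rle_abs]).
  assert (Rabs a * exp (- (t - T0)) <= Rabs a * / r)
    by (apply Rmult_le_compat_l; [apply Rabs_pos | exact Hexp]).
  lra.
Qed.

Lemma exp_decay_glue (x A M a T1 t : R) :
  0 <= a -> 0 <= M -> A <= M -> (t <= T1 -> x <= A) ->
  (T1 <= t -> x <= M * exp (- a * (t - T1))) -> x <= M * exp (a * T1) * exp (- a * t).
Proof.
  intros Ha HM HAM Hbefore Hafter.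
  rewrite Rmult_assoc, <- exp_plus. replace (a * T1 + - a * t) with (- a * (t - T1)) by ring.
  destruct (Rle_lt_dec T1 t) as [Ht | Ht]; [auto |].
  assert (1 <= exp (- a * (t - T1))).
  { rewrite <- exp_0. apply exp_le_exp. nra. }
  assert (x <= A) by (apply Hbefore; lra). nra.
Qed.

Lemma sup_th_half_sum_le (g1 g2 : R -> R) (r : R) :
  Rbar_le (Rbar_plus (Rbar_mult (Finite (/ 2)) (sup_th g1)) (Rbar_mult (Finite (/ 2)) (sup_th g2)))
    (Finite r) ->
  exists S1 S2, (forall th, g1 th <= S1) /\ (forall th, g2 th <= S2) /\ S1 / 2 + S2 / 2 <= r.
Proof.
  assert (Hsup : forall g : R -> R, sup_th g = p_infty \/
                   exists S, sup_th g = Finite S /\ forall th, g th <= S).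
  { intros g. unfold sup_th.
    destruct (Lub_Rbar_correct (fun y => exists th, y = g th)) as [Hub _].
    destruct (Lub_Rbar (fun y => exists th, y = g th)) as [S | |]; auto.
    - right. exists S. split; auto. intros th. apply (Hub (g th)). exists th; auto.
    - exfalso. exact (Hub (g 0) (ex_intro _ 0 eq_refl)). }
  assert (Hhalf : Rbar_mult (Finite (/ 2)) p_infty = p_infty).
  { simpl. destruct (Rle_dec 0 (/ 2)); [| lra].
    destruct (Rle_lt_or_eq_dec 0 (/ 2) r0); [reflexivity | lra]. }
  intros H.
  destruct (Hsup g1) as [E1 | [S1 [E1 H1]]]; destruct (Hsup g2) as [E2 | [S2 [E2 H2]]];
    rewrite ?E1, ?E2, ?Hhalf in H; simpl in H; try contradiction.
  exists S1, S2. repeat split; auto. lra.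
Qed.

Lemma cross_term_le (Z k x y : R) :
  Z ^ 2 <= k ^ 2 -> 0 < k -> - (2 * Z * x * y) <= k * (x ^ 2 + y ^ 2).
Proof.
  intros HZ Hk.
  assert (H : 0 <= k * (k * (x ^ 2 + y ^ 2) + 2 * Z * x * y)).
  { replace (k * (k * (x ^ 2 + y ^ 2) + 2 * Z * x * y))
      with ((k * x + Z * y) ^ 2 + (k ^ 2 - Z ^ 2) * y ^ 2) by ring.
    assert (0 <= (k ^ 2 - Z ^ 2) * y ^ 2) by (apply Rmult_le_pos; [lra | apply pow2_ge_0]).
    assert (0 <= (k * x + Z * y) ^ 2) by apply pow2_ge_0. lra. }
  assert (0 <= k * (x ^ 2 + y ^ 2) + 2 * Z * x * y) by (apply Rmult_le_reg_l with k; lra).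
  lra.
Qed.

Lemma shifted_sq_sum_le (k1 k2 a1 a2 b1 b2 S1 S2 c d : R) :
  Rabs k1 <= c -> Rabs k2 <= c -> 0 <= d ->
  a1 ^ 2 + b1 ^ 2 <= S1 -> a2 ^ 2 + b2 ^ 2 <= S2 -> S1 / 2 + S2 / 2 <= d ^ 2 ->
  (k1 + a1) ^ 2 + b1 ^ 2 + ((k2 + a2) ^ 2 + b2 ^ 2) <= 2 * (c + d) ^ 2.
Proof.
  intros Hk1 Hk2 Hd H1 H2 HS.
  assert (Hsq : forall x, x ^ 2 = Rabs x ^ 2) by (intros x; rewrite <- !Rsqr_pow2; apply Rsqr_abs).
  assert (Hshift : forall k a, Rabs k <= c -> (k + a) ^ 2 <= c ^ 2 + 2 * c * Rabs a + a ^ 2).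
  { intros k a Hk. rewrite (Hsq (k + a)).
    assert (Htri := Rabs_triang k a). assert (0 <= Rabs k) by apply Rabs_pos.
    assert (0 <= Rabs a) by apply Rabs_pos. assert (0 <= Rabs (k + a)) by apply Rabs_pos.
    rewrite (Hsq a). nra. }
  assert (Ha : Rabs a1 + Rabs a2 <= 2 * d).
  { assert (0 <= b1 ^ 2 /\ 0 <= b2 ^ 2) by (split; apply pow2_ge_0).
    assert (0 <= Rabs a1) by apply Rabs_pos. assert (0 <= Rabs a2) by apply Rabs_pos.
    assert (A1 := Hsq a1). assert (A2 := Hsq a2).
    apply Rnot_lt_le. intros Hlt.
    assert (0 < (Rabs a1 + Rabs a2 - 2 * d) * (Rabs a1 + Rabs a2 + 2 * d))
      by (apply Rmult_lt_0_compat; lra).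
    assert (0 <= (Rabs a1 - Rabs a2) ^ 2) by apply pow2_ge_0.
    nra. }
  assert (E1 := Hshift k1 a1 Hk1). assert (E2 := Hshift k2 a2 Hk2).
  assert (0 <= c) by (eapply Rle_trans; [apply Rabs_pos | exact Hk1]).
  nra.
Qed.

Lemma continuity_2d_pt_sq (f : fn2) t th :
  continuity_2d_pt f t th -> continuity_2d_pt (fun u v => f u v ^ 2) t th.
Proof.
  intros Hf. apply (continuity_2d_pt_ext (fun u v => f u v * f u v)).
  - intros u v. ring.
  - apply continuity_2d_pt_mult; exact Hf.
Qed.

Definition null_curve (w t th s : R) : R := th + w * (exp (- s) - exp (- t)).

Definition null_der (w : R) (f : fn2) : fn2 :=
  fun t th => d_tau f t th + w * exp (- t) * d_th f t th.

Lemma null_curve_at w t th : null_curve w t th t = th.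
Proof. unfold null_curve. ring. Qed.

Lemma along_null_curve (f : fn2) w t th :
  smooth2 f -> is_derive (fun s => f s (null_curve w t th s)) t (null_der (- w) f t th).
Proof.
  intros Hf.
  assert (Hc : is_derive (null_curve w t th) t (- w * exp (- t)))
    by (unfold null_curve; auto_derive; [exact I | ring]).
  assert (H := smooth2_chain f _ t _ Hf Hc).
  rewrite null_curve_at in H. exact H.
Qed.

Lemma null_der_transport (f : fn2) w t th :
  smooth2 f -> (w = 1 \/ w = -1) ->
  is_derive (fun s => null_der w f s (null_curve w t th s)) t
    (d_tau (d_tau f) t th - exp (- t) ^ 2 * d_th (d_th f) t th - w * exp (- t) * d_th f t th).
Proof.
  intros Hf Hw.
  assert (H := is_derive_null_combination _ _ w t _ _
    (along_null_curve (d_tau f) w t th (smooth2_d_tau f Hf))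
    (along_null_curve (d_th f) w t th (smooth2_d_th f Hf))).
  cbv beta in H. rewrite null_curve_at in H. unfold null_der in H.
  rewrite (smooth2_schwarz f t th Hf) in H.
  replace (d_tau (d_tau f) t th - exp (- t) ^ 2 * d_th (d_th f) t th
           - w * exp (- t) * d_th f t th)
    with (d_tau (d_tau f) t th + - w * exp (- t) * d_th (d_tau f) t th
          + w * exp (- t) * (d_th (d_tau f) t th + - w * exp (- t) * d_th (d_th f) t th
                             - d_th f t th))
    by (destruct Hw as [-> | ->]; ring).
  exact H.
Qed.

Lemma null_der_continuity (f : fn2) w :
  smooth2 f -> forall t th, continuity_2d_pt (null_der w f) t th.
Proof.
  intros Hf t th. unfold null_der.
  apply (continuity_2d_pt_plus (d_tau f) (fun u v => w * exp (- u) * d_th f u v)).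
  - apply smooth2_continuity, smooth2_d_tau, Hf.
  - apply (continuity_2d_pt_mult (fun u _ => w * exp (- u)) (d_th f)).
    + apply (continuity_2d_pt_mult (fun _ _ => w) (fun u _ => exp (- u))).
      * apply continuity_2d_pt_const.
      * apply (continuity_1d_2d_pt_comp exp (fun u _ => - u)).
        -- apply derivable_continuous_pt, derivable_pt_exp.
        -- apply continuity_2d_pt_opp, continuity_2d_pt_id1.
    + apply smooth2_continuity, smooth2_d_th, Hf.
Qed.

Lemma periodic_null_der (f : fn2) w : periodic_th f -> periodic_th (null_der w f).
Proof.
  intros Hf t th. unfold null_der.
  rewrite (periodic_d_tau f Hf), (periodic_d_th f Hf). reflexivity.
Qed.

Section NullStructure.

Variables (P Q : fn2) (tau0 : R).
Hypotheses (P_smooth : smooth2 P) (Q_smooth : smooth2 Q)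
  (P_per : periodic_th P) (Q_per : periodic_th Q) (PQ_sys : solves_system P Q tau0).

(* F(tau) is (sup e_1 + sup e_(-1)) / 2 with the constant 1/2 of [Pnull] replaced by P / tau. *)
Definition Pnull (w : R) : fn2 := fun t th => null_der w P t th - / 2.
Definition Qnull (w : R) : fn2 := fun t th => exp (P t th) * null_der w Q t th.
Definition null_energy (w : R) : fn2 := fun t th => Pnull w t th ^ 2 + Qnull w t th ^ 2.

Lemma system_P t th : tau0 <= t ->
  d_tau (d_tau P) t th - exp (- t) ^ 2 * d_th (d_th P) t th = Qnull 1 t th * Qnull (-1) t th.
Proof.
  intros Ht. destruct (PQ_sys t th Ht) as [E _].
  replace (- 2 * t) with (2 * - t) in E by ring. rewrite !exp_double in E.
  unfold Qnull, null_der. lra.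
Qed.

Lemma system_Q t th : tau0 <= t ->
  d_tau (d_tau Q) t th - exp (- t) ^ 2 * d_th (d_th Q) t th
  = - (null_der 1 P t th * null_der (-1) Q t th + null_der (-1) P t th * null_der 1 Q t th).
Proof.
  intros Ht. destruct (PQ_sys t th Ht) as [_ E].
  replace (- 2 * t) with (2 * - t) in E by ring. rewrite !exp_double in E.
  unfold null_der. lra.
Qed.

Lemma Pnull_transport w t th : (w = 1 \/ w = -1) -> tau0 <= t ->
  is_derive (fun s => Pnull w s (null_curve w t th s)) t
    (Qnull 1 t th * Qnull (-1) t th + (Pnull (- w) t th - Pnull w t th) / 2).
Proof.
  intros Hw Ht.
  assert (H := is_derive_plus _ _ _ _ _ (null_der_transport P w t th P_smooth Hw)
    (is_derive_const (- / 2) t)).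
  rewrite <- (system_P t th Ht).
  replace (d_tau (d_tau P) t th - exp (- t) ^ 2 * d_th (d_th P) t th
             + (Pnull (- w) t th - Pnull w t th) / 2)
    with (d_tau (d_tau P) t th - exp (- t) ^ 2 * d_th (d_th P) t th
          - w * exp (- t) * d_th P t th + 0)
    by (unfold Pnull, null_der; field).
  exact H.
Qed.

Lemma Qnull_transport w t th : (w = 1 \/ w = -1) -> tau0 <= t ->
  is_derive (fun s => Qnull w s (null_curve w t th s)) t
    (- Qnull w t th / 2 - Pnull w t th * Qnull (- w) t th).
Proof.
  intros Hw Ht.
  assert (H := is_derive_exp_mult _ _ t _ _ (along_null_curve P w t th P_smooth)
    (null_der_transport Q w t th Q_smooth Hw)).
  cbv beta in H. rewrite null_curve_at in H.
  replace (- Qnull w t th / 2 - Pnull w t th * Qnull (- w) t th) with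
    (exp (P t th) * (null_der (- w) P t th * null_der w Q t th +
      (d_tau (d_tau Q) t th - exp (- t) ^ 2 * d_th (d_th Q) t th - w * exp (- t) * d_th Q t th))).
  { exact H. }
  rewrite (system_Q t th Ht). unfold Pnull, Qnull, null_der.
  destruct Hw as [-> | ->]; field.
Qed.

Lemma null_energy_transport w t th : (w = 1 \/ w = -1) -> tau0 <= t ->
  is_derive (fun s => null_energy w s (null_curve w t th s)) t
    (- null_energy w t th + Pnull 1 t th * Pnull (-1) t th).
Proof.
  intros Hw Ht.
  assert (H := is_derive_plus _ _ _ _ _
    (is_derive_sq _ t _ (Pnull_transport w t th Hw Ht))
    (is_derive_sq _ t _ (Qnull_transport w t th Hw Ht))).
  cbv beta in H. rewrite !null_curve_at in H.
  replace (- null_energy w t th + Pnull 1 t th * Pnull (-1) t th) with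
    (2 * Pnull w t th * (Qnull 1 t th * Qnull (-1) t th + (Pnull (- w) t th - Pnull w t th) / 2) +
     2 * Qnull w t th * (- Qnull w t th / 2 - Pnull w t th * Qnull (- w) t th)).
  { exact H. }
  (* At w = 1 (resp. -1) the index [- w] is [Ropp 1] (resp. [Ropp (-1)]), not a numeral. *)
  unfold null_energy. destruct Hw as [-> | ->];
    [replace (Ropp 1) with (-1) by ring | replace (Ropp (-1)) with 1 by ring]; field.
Qed.

Lemma Qnull_sq_transport w t th : (w = 1 \/ w = -1) -> tau0 <= t ->
  is_derive (fun s => Qnull w s (null_curve w t th s) ^ 2) t
    (- Qnull w t th ^ 2 - 2 * Pnull w t th * Qnull 1 t th * Qnull (-1) t th).
Proof.
  intros Hw Ht.
  assert (H := is_derive_sq _ t _ (Qnull_transport w t th Hw Ht)).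
  cbv beta in H. rewrite null_curve_at in H.
  replace (- Qnull w t th ^ 2 - 2 * Pnull w t th * Qnull 1 t th * Qnull (-1) t th) with
    (2 * Qnull w t th * (- Qnull w t th / 2 - Pnull w t th * Qnull (- w) t th)).
  { exact H. }
  destruct Hw as [-> | ->];
    [replace (Ropp 1) with (-1) by ring | replace (Ropp (-1)) with 1 by ring]; field.
Qed.

Lemma Pnull_continuity w t th : continuity_2d_pt (Pnull w) t th.
Proof.
  apply (continuity_2d_pt_minus (null_der w P) (fun _ _ => / 2)).
  - apply null_der_continuity, P_smooth.
  - apply continuity_2d_pt_const.
Qed.

Lemma Qnull_continuity w t th : continuity_2d_pt (Qnull w) t th.
Proof.
  apply (continuity_2d_pt_mult (fun u v => exp (P u v)) (null_der w Q)).
  - apply (continuity_1d_2d_pt_comp exp P).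
    + apply derivable_continuous_pt, derivable_pt_exp.
    + apply smooth2_continuity, P_smooth.
  - apply null_der_continuity, Q_smooth.
Qed.

Lemma null_energy_continuity w t th : continuity_2d_pt (null_energy w) t th.
Proof.
  apply (continuity_2d_pt_plus (fun u v => Pnull w u v ^ 2) (fun u v => Qnull w u v ^ 2));
    apply continuity_2d_pt_sq; [apply Pnull_continuity | apply Qnull_continuity].
Qed.

Lemma periodic_Pnull w : periodic_th (Pnull w).
Proof. intros t th. unfold Pnull. rewrite periodic_null_der; auto. Qed.

Lemma periodic_Qnull w : periodic_th (Qnull w).
Proof. intros t th. unfold Qnull. rewrite periodic_null_der, P_per; auto. Qed.

Lemma periodic_null_energy w : periodic_th (null_energy w).
Proof. intros t th. unfold null_energy. rewrite periodic_Pnull, periodic_Qnull. reflexivity. Qed.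

Lemma null_energy_nonneg w t th : 0 <= null_energy w t th.
Proof.
  unfold null_energy. assert (H := pow2_ge_0 (Pnull w t th)).
  assert (H' := pow2_ge_0 (Qnull w t th)). lra.
Qed.

Lemma Pnull_sq_le w t th : Pnull w t th ^ 2 <= null_energy w t th.
Proof. unfold null_energy. assert (0 <= Qnull w t th ^ 2) by apply pow2_ge_0. lra. Qed.

Lemma Qnull_sq_le w t th : Qnull w t th ^ 2 <= null_energy w t th.
Proof. unfold null_energy. assert (0 <= Pnull w t th ^ 2) by apply pow2_ge_0. lra. Qed.

Lemma Qnull_sq_sum_le t th1 th2 :
  Qnull 1 t th1 ^ 2 + Qnull (-1) t th2 ^ 2 <= null_energy 1 t th1 + null_energy (-1) t th2.
Proof. assert (H1 := Qnull_sq_le 1 t th1). assert (H2 := Qnull_sq_le (-1) t th2). lra. Qed.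

Lemma Pnull_product_le t th :
  Pnull 1 t th * Pnull (-1) t th <= (null_energy 1 t th + null_energy (-1) t th) / 2.
Proof.
  assert (H1 := Qnull_sq_le 1 t th). assert (H2 := Qnull_sq_le (-1) t th).
  assert (0 <= (Pnull 1 t th - Pnull (-1) t th) ^ 2) by apply pow2_ge_0.
  unfold null_energy in *. nra.
Qed.

Lemma null_energy_sum_le L :
  (forall th1 th2, null_energy 1 tau0 th1 + null_energy (-1) tau0 th2 <= 2 * L) ->
  forall t th1 th2, tau0 <= t -> null_energy 1 t th1 + null_energy (-1) t th2 <= 2 * L.
Proof.
  intros Hinit t th1 th2 Ht. apply Rle_plus_epsilon. intros eps Heps.
  set (B := fun s => 2 * L + eps / 2 * (2 - exp (- (s - tau0)))).
  assert (HB : forall s, is_derive B s (eps / 2 * exp (- (s - tau0))))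
    by (intros s; unfold B; auto_derive; [exact I | unfold Rminus; ring]).
  enough (null_energy 1 t th1 + null_energy (-1) t th2 < B t)
    by (assert (0 < exp (- (t - tau0))) by apply exp_pos; unfold B in *; nra).
  apply (periodic_comparison2 _ _ B (fun s => eps / 2 * exp (- (s - tau0))) tau0);
    auto using null_energy_continuity, periodic_null_energy.
  - intros p1 p2. specialize (Hinit p1 p2). unfold B. rewrite Rminus_eq_0, Ropp_0, exp_0. lra.
  - intros s p1 p2 Hs Hle Heq.
    exists (null_curve 1 s p1), (null_curve (-1) s p2); do 2 eexists.
    split; [apply null_curve_at |]. split; [apply null_curve_at |].
    split; [apply null_energy_transport; auto; lra |].
    split; [apply null_energy_transport; auto; lra |].
    assert (Z1 := Pnull_product_le s p1). assert (Z2 := Pnull_product_le s p2).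
    assert (A1 := Hle p1 p1). assert (A2 := Hle p2 p2).
    assert (0 < eps / 2 * exp (- (s - tau0))) by (apply Rmult_lt_0_compat; [lra | apply exp_pos]).
    lra.
Qed.

Lemma null_energy_le L w : (w = 1 \/ w = -1) ->
  (forall t th1 th2, tau0 <= t -> null_energy 1 t th1 + null_energy (-1) t th2 <= 2 * L) ->
  forall t th, tau0 <= t -> null_energy w t th <= L * (1 + 2 * exp (- (t - tau0))).
Proof.
  intros Hw Hsum t th Ht.
  assert (Hinit : forall th', null_energy w tau0 th' <= 2 * L).
  { intros th'. specialize (Hsum tau0 th' th' ltac:(lra)).
    assert (H1 := null_energy_nonneg 1 tau0 th'). assert (H2 := null_energy_nonneg (-1) tau0 th').
    destruct Hw as [-> | ->]; lra. }
  assert (HL : 0 <= L) by (assert (H := null_energy_nonneg w tau0 th); specialize (Hinit th); lra).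
  apply Rle_plus_epsilon. intros eps Heps.
  set (B := fun s => L + eps + 2 * L * exp (- (s - tau0))).
  assert (HB : forall s, is_derive B s (- (2 * L * exp (- (s - tau0)))))
    by (intros s; unfold B; auto_derive; [exact I | unfold Rminus; ring]).
  enough (null_energy w t th < B t) by (unfold B in *; lra).
  apply (periodic_comparison _ B (fun s => - (2 * L * exp (- (s - tau0)))) tau0);
    auto using null_energy_continuity, periodic_null_energy.
  - intros th'. specialize (Hinit th'). unfold B. rewrite Rminus_eq_0, Ropp_0, exp_0. lra.
  - intros s th' Hs Hle Heq.
    exists (null_curve w s th'). eexists.
    split; [apply null_curve_at |]. split; [apply null_energy_transport; auto; lra |].
    assert (Z := Pnull_product_le s th'). assert (A := Hsum s th' th' ltac:(lra)).
    unfold B in Heq. lra.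
Qed.

Lemma Pnull_sq_eventually_le L kappa :
  (forall t th1 th2, tau0 <= t -> null_energy 1 t th1 + null_energy (-1) t th2 <= 2 * L) ->
  L < kappa ^ 2 ->
  exists T1, tau0 <= T1 /\
    forall w t th, (w = 1 \/ w = -1) -> T1 <= t -> Pnull w t th ^ 2 <= kappa ^ 2.
Proof.
  intros Hsum HLk.
  destruct (exp_neg_eventually_le (2 * L) (kappa ^ 2 - L) tau0) as [T1 [HT1 Hsmall]]; [lra |].
  exists T1. split; [exact HT1 |]. intros w t th Hw Ht.
  assert (H := null_energy_le L w Hw Hsum t th ltac:(lra)).
  assert (Hs := Pnull_sq_le w t th). specialize (Hsmall t Ht). lra.
Qed.

Lemma Qnull_sq_sum_decay T1 kappa a M :
  tau0 <= T1 -> 0 < kappa -> a < 1 - 2 * kappa ->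
  (forall w t th, (w = 1 \/ w = -1) -> T1 <= t -> Pnull w t th ^ 2 <= kappa ^ 2) ->
  (forall th1 th2, Qnull 1 T1 th1 ^ 2 + Qnull (-1) T1 th2 ^ 2 < M) ->
  forall t th1 th2, T1 <= t ->
    Qnull 1 t th1 ^ 2 + Qnull (-1) t th2 ^ 2 < M * exp (- a * (t - T1)).
Proof.
  intros HT1 Hk Ha HZ Hinit.
  assert (HM : 0 < M).
  { specialize (Hinit 0 0).
    assert (0 <= Qnull 1 T1 0 ^ 2 /\ 0 <= Qnull (-1) T1 0 ^ 2) by (split; apply pow2_ge_0). lra. }
  set (B := fun s => M * exp (- a * (s - T1))).
  assert (HB : forall s, is_derive B s (- a * B s))
    by (intros s; unfold B; auto_derive; [exact I | unfold Rminus; ring]).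
  assert (Hsq : forall w, periodic_th (fun u v => Qnull w u v ^ 2)).
  { intros w u v. simpl. rewrite periodic_Qnull. reflexivity. }
  apply (periodic_comparison2 _ _ B (fun s => - a * B s) T1);
    auto using continuity_2d_pt_sq, Qnull_continuity.
  - intros th1 th2. unfold B. rewrite Rminus_eq_0, Rmult_0_r, exp_0, Rmult_1_r. apply Hinit.
  - intros s p1 p2 Hs Hle Heq.
    exists (null_curve 1 s p1), (null_curve (-1) s p2); do 2 eexists.
    split; [apply null_curve_at |]. split; [apply null_curve_at |].
    split; [apply Qnull_sq_transport; auto; lra |].
    split; [apply Qnull_sq_transport; auto; lra |].
    assert (C1 := cross_term_le _ _ (Qnull 1 s p1) (Qnull (-1) s p1)
      (HZ 1 s p1 ltac:(auto) ltac:(lra)) Hk).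
    assert (C2 := cross_term_le _ _ (Qnull 1 s p2) (Qnull (-1) s p2)
      (HZ (-1) s p2 ltac:(auto) ltac:(lra)) Hk).
    assert (A1 := Hle p1 p1). assert (A2 := Hle p2 p2).
    assert (HBs : 0 < B s) by (unfold B; apply Rmult_lt_0_compat; [lra | apply exp_pos]).
    nra.
Qed.

Lemma Qnull_sq_sum t th :
  exp (2 * P t th) * (d_tau Q t th ^ 2 + exp (- 2 * t) * d_th Q t th ^ 2)
  = (Qnull 1 t th ^ 2 + Qnull (-1) t th ^ 2) / 2.
Proof.
  replace (- 2 * t) with (2 * - t) by ring. rewrite !exp_double.
  unfold Qnull, null_der. field.
Qed.

Lemma null_energy_init_le c d :
  0 < tau0 -> 0 <= d -> (forall th, Rabs (P tau0 th / tau0 - / 2) <= c) ->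
  Rbar_le (F_fun P Q tau0) (Finite (d ^ 2)) ->
  forall th1 th2, null_energy 1 tau0 th1 + null_energy (-1) tau0 th2 <= 2 * (c + d) ^ 2.
Proof.
  intros Ht0 Hd Hc HF th1 th2.
  destruct (sup_th_half_sum_le _ _ _ HF) as [S1 [S2 [HS1 [HS2 HS]]]].
  specialize (HS1 th1). specialize (HS2 th2). cbv beta in HS1, HS2.
  rewrite exp_double, <- Rpow_mult_distr in HS1, HS2.
  eapply Rle_trans; [right | exact (shifted_sq_sum_le _ _ _ _ _ _ S1 S2 c d
    (Hc th1) (Hc th2) Hd HS1 HS2 HS)].
  unfold null_energy, Pnull, Qnull, null_der. field. lra.
Qed.

End NullStructure.

Theorem lemma2 (P Q : R -> R -> R) (tau0 gamma alpha : R) :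
  smooth2 P -> smooth2 Q -> periodic_th P -> periodic_th Q ->
  solves_system P Q tau0 ->
  2 <= tau0 ->
  0 < gamma ->
  (forall th, 1 <= P tau0 th <= tau0 - 1) ->
  (forall th, gamma <= P tau0 th / tau0 <= 1 - gamma) ->
  0 < alpha -> alpha < gamma ->
  Rbar_le (F_fun P Q tau0) (Finite ((gamma - alpha) ^ 2)) ->
  exists C : R, forall tau, tau0 <= tau ->
    forall th,
      exp (2 * P tau th) * ((d_tau Q tau th) ^ 2 + exp (- 2 * tau) * (d_th Q tau th) ^ 2)
        <= C * exp (- alpha * tau).
Proof.
  intros HP HQ HPper HQper Hsys Ht0 Hg _ HPratio Ha Hag HF.
  assert (Hg2 : gamma <= / 2) by (destruct (HPratio 0); lra).
  (* kappa lies strictly between 1/2 - alpha and 1/2 - alpha / 2, so that L < kappa^2 and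
     alpha < 1 - 2 kappa. *)
  set (L := (/ 2 - alpha) ^ 2). set (kappa := / 2 - 3 * alpha / 4).
  assert (Hinit : forall th1 th2,
            null_energy P Q 1 tau0 th1 + null_energy P Q (-1) tau0 th2 <= 2 * L).
  { replace L with (((/ 2 - gamma) + (gamma - alpha)) ^ 2) by (unfold L; ring).
    apply null_energy_init_le; [lra | lra | | exact HF].
    intros th. destruct (HPratio th). apply Rabs_le. lra. }
  assert (Hsum := null_energy_sum_le P Q tau0 HP HQ HPper HQper Hsys L Hinit).
  assert (HQsum := fun t th1 th2 Ht =>
    Rle_trans _ _ _ (Qnull_sq_sum_le P Q t th1 th2) (Hsum t th1 th2 Ht)).
  destruct (Pnull_sq_eventually_le P Q tau0 HP HQ HPper HQper Hsys L kappa Hsum)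
    as [T1 [HT1 HZ]]; [unfold L, kappa; nra |].
  assert (Hdecay := Qnull_sq_sum_decay P Q tau0 HP HQ HPper HQper Hsys T1 kappa alpha (2 * L + 2)
    HT1 ltac:(unfold kappa; lra) ltac:(unfold kappa; lra) HZ).
  exists ((L + 1) * exp (alpha * T1)). intros tau Htau th.
  rewrite Qnull_sq_sum.
  apply (exp_decay_glue _ L); [lra | unfold L; nra | unfold L; lra | |].
  - intros _. specialize (HQsum tau th th Htau). lra.
  - intros Ht. assert (H := Hdecay (fun th1 th2 => ltac:(specialize (HQsum T1 th1 th2 HT1); lra))
      tau th th Ht). lra.
Qed.
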